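(* Let $p,q$ be integers and $x,y$ non-negative integers with $2=\sigma(p^x-q^y)$ for some $\sigma\in\{1,-1\}$. Let $\alpha=\sum_{i=0}^{I}a_ip^i$ with $a_i\in\mathbb{Z}$, $I\in\mathbb{N}_0$, and put $w=\sum_{i=0}^I|a_i|$. Then, starting from this representation, after at most $\frac{w^2-w}{2}$ replacement steps one arrives at a representation $$\alpha=\sum_{j=0}^{J}q^{jy}\sum_{k=0}^{K}b_{k,j}p^k$$ with $J,K\in\mathbb{N}_0$ and integers $b_{k,j}$ satisfying $|b_{k,j}|\leq 1$.
   Context: Representations considered are finite sums $\alpha=\sum_{j\geq0}q^{jy}\sum_{k\geq 0}c_{k,j}p^k$ with integer coefficients $c_{k,j}$. A replacement step chooses $(k,j)$ with $|c_{k,j}|\geq 2$, writes $s=\operatorname{sign}(c_{k,j})$, replaces $c_{k,j}$ by $c_{k,j}-2s$, and uses $2p^kq^{jy}=\sigma(p^{k+x}q^{jy}-p^kq^{(j+1)y})$ to add $s\sigma$ to $c_{k+x,j}$ and $-s\sigma$ to $c_{k,j+1}$. *)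

From HB Require Import structures.
From mathcomp Require Import all_boot all_order all_algebra.
Set Implicit Arguments. Unset Strict Implicit. Unset Printing Implicit Defensive.
Import Order.TTheory GRing.Theory Num.Theory.
Local Open Scope ring_scope.

(* A representation  sum_{j>=0} q^{jy} sum_{k>=0} c k j p^k  is encoded by its
   coefficient function c : nat -> nat -> int (c k j = c_{k,j}). *)
Definition rep := nat -> nat -> int.

(* The sign s = sign(c) of a nonzero integer (used only when |c| >= 2). *)
Definition sgn (c : int) : int := if 0 < c then 1 else -1.

Definition replacement_step (sigma : int) (x : nat) (c c' : rep) : Prop :=
  exists k j : nat,
    2 <= `|c k j| /\
    let s := sgn (c k j) in
    forall k' j' : nat,
      c' k' j' = c k' j'
                 - (if (k' == k) && (j' == j) then 2 * s else 0)
                 + (if (k' == (k + x)%N) && (j' == j) then s * sigma else 0)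
                 - (if (k' == k) && (j' == j.+1) then s * sigma else 0).

Fixpoint replacement_steps (sigma : int) (x : nat) (n : nat) (c c' : rep) : Prop :=
  match n with
  | 0%N => c = c'
  | n'.+1 => exists c'' : rep,
      replacement_step sigma x c c'' /\ replacement_steps sigma x n' c'' c'
  end.

Definition initial_rep (a : nat -> int) (I : nat) : rep :=
  fun k j => if (j == 0%N) && (k <= I)%N then a k else 0.

From HB Require Import structures.
From mathcomp Require Import all_boot all_order all_algebra zify ring.
Import Order.TTheory GRing.Theory Num.Theory.
Local Open Scope ring_scope.
Set Implicit Arguments. Unset Strict Implicit.

(* A replacement step at (k,j) only touches row j (columns k and
   k+x) and row j+1 (column k).  Measuring row j by its weight
   W_j = sum_k |c_{k,j}|, a step at (k,j) lowers W_j by at least 1 and raises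
   W_{j+1} by at most 1; since 2 = sigma (p^x - q^y) it does not change the
   value sum_{k,j} c_{k,j} q^{jy} p^k.  So the rows are cleaned from the
   bottom up: a row of weight W is brought to coefficients in {-1,0,1} by at
   most W - 1 steps at coefficients of that row, which push a weight of at most
   W - 1 into the (still empty) next row.  Starting from a single row of weight
   w, the total number of steps is at most
   (w-1) + (w-2) + ... + 1 = 'C(w,2) = (w^2 - w)/2.
   The file first sets up supports, row weights and values of representations,
   then describes one step explicitly (its effect on supports, row weights and
   values), proves the row-cleaning lemma and its iteration over all rows, and
   finally derives the theorem from the initial representation. *)

Lemma big_ord_indicator {R : Type} {idx : R} (op : Monoid.law idx)
    (n a : nat) (F : nat -> R) :
  \big[op/idx]_(k < n) (if (k : nat) == a then F k else idx)
    = if (a < n)%N then F a else idx.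
Proof. by rewrite -big_mkcond big_ord1_eq. Qed.

Lemma count_ord_eq (n a : nat) : (\sum_(k < n) ((k : nat) == a))%N = (a < n)%N.
Proof.
transitivity (\sum_(k < n) if (k : nat) == a then 1 else 0)%N.
  by apply: eq_bigr => k _; case: eqP.
by rewrite (big_ord_indicator _ n a (fun _ => 1%N)); case: (a < n)%N.
Qed.

Lemma sum_point (R : pzSemiRingType) (N a b : nat) (v : R) (G : nat -> nat -> R) :
  (a < N)%N -> (b < N)%N ->
  \sum_(j < N) \sum_(k < N)
     (if ((k : nat) == a) && ((j : nat) == b) then v else 0) * G j k = v * G b a.
Proof.
move=> aN bN.
transitivity (\sum_(j < N) if (j : nat) == b then v * G j a else 0);
  last by rewrite (big_ord_indicator _ N b (fun j => v * G j a)) bN.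
apply: eq_bigr => j _; case: eqP => [_ | _]; last by apply: big1 => k _; rewrite andbF mul0r.
transitivity (\sum_(k < N) if (k : nat) == a then v * G j k else 0);
  last by rewrite (big_ord_indicator _ N a (fun k => v * G j k)) aN.
by apply: eq_bigr => k _; rewrite andbT; case: eqP; rewrite ?mul0r.
Qed.

Lemma sgn_reduce (c : int) :
  2 <= `|c| -> `|c - 2 * sgn c| + 2 = `|c| /\ (sgn c = 1 \/ sgn c = -1).
Proof. by rewrite /sgn; case: ifP => ? ?; lia. Qed.

Definition supported (c : rep) (N : nat) : Prop :=
  forall k j : nat, (N <= k)%N \/ (N <= j)%N -> c k j = 0.

Lemma supported_big_coef (c : rep) (N k j : nat) :
  supported c N -> 2 <= `|c k j| -> (k < N)%N /\ (j < N)%N.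
Proof.
move=> cN ckj; rewrite !ltnNge; split; apply/negP => NB; move: ckj.
- by rewrite cN //; left.
- by rewrite cN //; right.
Qed.

Definition row_weight (c : rep) (j N : nat) : nat := (\sum_(k < N) `|c k j|%N)%N.

Lemma row_weight_widen (c : rep) (j N M : nat) :
  supported c N -> (N <= M)%N -> row_weight c j M = row_weight c j N.
Proof.
move=> cN NM; rewrite /row_weight -(subnKC NM) big_split_ord /= -[RHS]addn0.
by congr addn; apply: big1 => k _; rewrite cN //; left; rewrite leq_addr.
Qed.

Lemma coef_le_row_weight (c : rep) (j N k : nat) :
  (k < N)%N -> (`|c k j|%N <= row_weight c j N)%N.
Proof. by move=> kN; rewrite /row_weight (bigD1 (Ordinal kN)) //= leq_addr. Qed.

Definition value (p q : int) (y : nat) (c : rep) (N : nat) : int :=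
  \sum_(j < N) \sum_(k < N) c k j * (q ^+ (j * y) * p ^+ k).

Lemma value_by_rows (p q : int) (y : nat) (c : rep) (N : nat) :
  value p q y c N = \sum_(j < N) q ^+ (j * y) * \sum_(k < N) c k j * p ^+ k.
Proof.
by apply: eq_bigr => j _; rewrite mulr_sumr; apply: eq_bigr => k _; rewrite mulrCA.
Qed.

Lemma value_initial_rep (p q : int) (y : nat) (a : nat -> int) (I N : nat) :
  (I < N)%N -> value p q y (initial_rep a I) N = \sum_(i < I.+1) a i * p ^+ i.
Proof.
case: N => // N IN; rewrite /value big_ord_recl /= [X in _ + X]big1 ?addr0; last first.
  by move=> j _; apply: big1 => k _; rewrite /initial_rep /= mul0r.
rewrite (big_ord_widen N.+1 (fun i => a i * p ^+ i) IN) [RHS]big_mkcond /=.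
by apply: eq_bigr => k _; rewrite /initial_rep /= ltnS; case: ifP; rewrite ?mul0r // mul1r.
Qed.

Section Replacement.

Variables (sigma : int) (x : nat).

Definition replace (c : rep) (k j : nat) : rep :=
  fun k' j' => c k' j'
    - (if (k' == k) && (j' == j) then 2 * sgn (c k j) else 0)
    + (if (k' == (k + x)%N) && (j' == j) then sgn (c k j) * sigma else 0)
    - (if (k' == k) && (j' == j.+1) then sgn (c k j) * sigma else 0).

Lemma replace_step (c : rep) (k j : nat) :
  2 <= `|c k j| -> replacement_step sigma x c (replace c k j).
Proof. by move=> ckj; exists k, j. Qed.

Lemma step_replace (c c' : rep) : replacement_step sigma x c c' ->
  exists k j, 2 <= `|c k j| /\ c' =2 replace c k j.
Proof. by case=> k [j [ckj E]]; exists k, j. Qed.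

Lemma replacement_steps_cat (m n : nat) (c c' c'' : rep) :
  replacement_steps sigma x m c c' -> replacement_steps sigma x n c' c'' ->
  replacement_steps sigma x (m + n) c c''.
Proof.
elim: m c => [|m IH] c /= => [-> // | [c1 [step steps]] steps'].
by exists c1; split => //; apply: IH steps steps'.
Qed.

Lemma replace_supported (c : rep) (N k j : nat) :
  supported c N -> 2 <= `|c k j| -> supported (replace c k j) (N + x).+1.
Proof.
move=> cN ckj k' j' out; have [kN jN] := supported_big_coef cN ckj.
rewrite /replace cN; last by lia.
by case: (eqVneq k' k); case: (eqVneq k' (k + x)%N); case: (eqVneq j' j);
   case: (eqVneq j' j.+1) => /= *; rewrite ?subr0 ?addr0 //; lia.
Qed.

Lemma replace_off_rows (c : rep) (k j k' j' : nat) :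
  j' != j -> j' != j.+1 -> replace c k j k' j' = c k' j'.
Proof. by move=> /negbTE ji /negbTE ji1; rewrite /replace ji ji1 !andbF subr0 addr0 subr0. Qed.

Lemma steps_supported (n : nat) (c b : rep) (N : nat) :
  replacement_steps sigma x n c b -> supported c N -> supported b (N + n * x.+1).
Proof.
elim: n c N => [|n IH] c N /= => [<- | [c1 [step steps]] cN]; first by rewrite addn0.
have [k [j [ckj E]]] := step_replace step.
have c1N : supported c1 (N + x).+1.
  by move=> k' j' out; rewrite E; apply: replace_supported cN ckj _ _ out.
rewrite (_ : (N + n.+1 * x.+1 = (N + x).+1 + n * x.+1)%N); last by rewrite mulSn; lia.
exact: IH steps c1N.
Qed.

Section RowCleaning.
Hypothesis sigma_unit : sigma = 1 \/ sigma = -1.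

(* Columnwise effect on row j: column k loses 2 and column k+x gains at most
   1; stated with indicators, so that it also covers the case x = 0. *)
Lemma replace_row_coef (c : rep) (k j k' : nat) : 2 <= `|c k j| ->
  (`|replace c k j k' j|%N + (k' == k) + (k' == k) <= `|c k' j|%N + (k' == k + x)%N)%N.
Proof.
move=> ckj; have [drop sgn1] := sgn_reduce ckj.
rewrite /replace eqxx (ltn_eqF (ltnSn j)) !andbT !andbF.
move: drop sgn1; set s := sgn (c k j) => drop sgn1.
case: (eqVneq k' k) => [-> | ne] /=; first by case: eqP => /= _; lia.
by case: (eqVneq k' (k + x)%N) => [-> | ne'] /=; lia.
Qed.

Lemma replace_next_row_coef (c : rep) (k j k' : nat) : 2 <= `|c k j| ->
  (`|replace c k j k' j.+1|%N <= `|c k' j.+1|%N + (k' == k))%N.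
Proof.
move=> ckj; have [_ sgn1] := sgn_reduce ckj.
rewrite /replace eqxx (gtn_eqF (ltnSn j)) !andbT !andbF.
by move: sgn1; set s := sgn (c k j) => sgn1; case: (eqVneq k' k) => [-> | ne] /=; lia.
Qed.

Lemma replace_row_weight (c : rep) (N k j : nat) :
  supported c N -> 2 <= `|c k j| ->
  (row_weight (replace c k j) j (N + x).+1 < row_weight c j N)%N.
Proof.
move=> cN ckj; have [kN _] := supported_big_coef cN ckj.
rewrite -(row_weight_widen j cN (_ : N <= (N + x).+1)%N); last by lia.
have : (\sum_(i < (N + x).+1)
            (`|replace c k j i j|%N + ((i : nat) == k) + ((i : nat) == k))
         <= \sum_(i < (N + x).+1) (`|c i j|%N + ((i : nat) == k + x)))%N.
  by apply: leq_sum => i _; apply: replace_row_coef.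
have [kNx kxNx] : (k < (N + x).+1)%N /\ (k + x < (N + x).+1)%N by lia.
by rewrite !big_split /= !count_ord_eq kNx kxNx /row_weight /=; lia.
Qed.

Lemma replace_next_row_weight (c : rep) (N k j : nat) :
  supported c N -> 2 <= `|c k j| ->
  (row_weight (replace c k j) j.+1 (N + x).+1 <= row_weight c j.+1 N + 1)%N.
Proof.
move=> cN ckj; rewrite -(row_weight_widen j.+1 cN (_ : N <= (N + x).+1)%N); last by lia.
have : (\sum_(i < (N + x).+1) `|replace c k j i j.+1|%N
         <= \sum_(i < (N + x).+1) (`|c i j.+1|%N + ((i : nat) == k)))%N.
  by apply: leq_sum => i _; apply: replace_next_row_coef.
by rewrite big_split /= count_ord_eq /row_weight; case: (k < (N + x).+1)%N => /=; lia.
Qed.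

Lemma clean_row (j : nat) (c : rep) (N : nat) : supported c N ->
  exists m c' N',
    [/\ (m <= (row_weight c j N).-1)%N, replacement_steps sigma x m c c'
       & supported c' N'] /\
    [/\ forall k i, i != j -> i != j.+1 -> c' k i = c k i,
        forall k, `|c' k j| <= 1
       & (row_weight c' j.+1 N' <= row_weight c j.+1 N + m)%N].
Proof.
have [B] := ubnP (row_weight c j N); elim: B c N => // B IH c N wB cN.
case: (pickP (fun k : 'I_N => 2 <= `|c k j|)) => [k ckj | clean]; last first.
  exists 0%N, c, N; split; split => //; last by rewrite addn0.
  move=> k; case: (ltnP k N) => [kN | Nk]; last by rewrite cN //; left.
  by have /= := clean (Ordinal kN); lia.
have weight_ge := coef_le_row_weight c j (ltn_ord k).
have drop := replace_row_weight cN ckj.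
have grow := replace_next_row_weight cN ckj.
have [|m [c' [N' [[m_le steps c'N'] [off clean_j next]]]]] :=
  IH (replace c k j) (N + x).+1 _ (replace_supported cN ckj); first by lia.
exists m.+1, c', N'; split; split => //.
- by lia.
- by exists (replace c k j); split => //; apply: replace_step.
- by move=> k' i ij ij1; rewrite off // replace_off_rows.
- by lia.
Qed.

Lemma clean_rows (j : nat) (c : rep) (N : nat) : supported c N ->
  (forall k i, (i < j)%N -> `|c k i| <= 1) -> (forall k i, (j < i)%N -> c k i = 0) ->
  exists n b, [/\ (n <= 'C(row_weight c j N, 2))%N,
                  replacement_steps sigma x n c b & forall k i, `|b k i| <= 1].
Proof.
have [B] := ubnP (row_weight c j N); elim: B j c N => // B IH j c N wB cN below above.
case W: (row_weight c j N) => [|W0].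
  exists 0%N, c; split => // k i; case: (ltngtP i j) => [ij | ji | ->]; first exact: below.
    by rewrite above.
  case: (ltnP k N) => [kN | Nk]; last by rewrite cN //; left.
  by have := coef_le_row_weight c j kN; rewrite W; lia.
have [m [c1 [N1 [[m_le steps c1N1] [off clean_j next]]]]] := clean_row j cN.
have next0 : row_weight c j.+1 N = 0%N by apply: big1 => k _; rewrite above.
have below1 : forall k i, (i < j.+1)%N -> `|c1 k i| <= 1.
  move=> k i; rewrite ltnS leq_eqVlt => /orP [/eqP -> // | ij].
  by rewrite off ?below // ltn_eqF // ltnW.
have above1 : forall k i, (j.+1 < i)%N -> c1 k i = 0.
  by move=> k i ji; rewrite off ?above ?gtn_eqF //; lia.
have [|n [b [n_le steps' clean]]] := IH j.+1 c1 N1 _ c1N1 below1 above1; first by lia.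
exists (m + n)%N, b; split => //; last exact: replacement_steps_cat steps steps'.
rewrite binS bin1.
have := leq_bin2l 2 (_ : row_weight c1 j.+1 N1 <= W0)%N; lia.
Qed.

End RowCleaning.

Section Value.
Variables (p q : int) (y : nat).
Hypothesis two_eq : 2 = sigma * (p ^+ x - q ^+ y).

(* A step does not change the value, because 2 p^k = sigma (p^(k+x) - q^y p^k). *)
Lemma replace_value (c : rep) (N M k j : nat) :
  supported c N -> 2 <= `|c k j| -> ((N + x).+1 <= M)%N ->
  value p q y (replace c k j) M = value p q y c M.
Proof.
move=> cN ckj NM; have [kN jN] := supported_big_coef cN ckj.
have [kM jM kxM j1M] : [/\ k < M, j < M, k + x < M & j.+1 < M]%N by split; lia.
set s := sgn (c k j); set G := fun j' k' : nat => q ^+ (j' * y) * p ^+ k'.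
have split_term : forall j' k' : nat, replace c k j k' j' * G j' k' =
    c k' j' * G j' k'
    - (if (k' == k) && (j' == j) then 2 * s else 0) * G j' k'
    + (if (k' == (k + x)%N) && (j' == j) then s * sigma else 0) * G j' k'
    - (if (k' == k) && (j' == j.+1) then s * sigma else 0) * G j' k'.
  by move=> j' k'; rewrite /replace -/s; ring.
rewrite /value -/G.
under eq_bigr => j' _ do under eq_bigr => k' _ do rewrite split_term.
under eq_bigr => j' _ do rewrite sumrB big_split sumrB /=.
rewrite sumrB big_split sumrB /= !sum_point //.
rewrite /G exprD mulSn exprD.
set T := \sum_(j' < M) _.
rewrite (_ : _ - _ * (q ^+ (j * y) * p ^+ k) + _ - _ =
   T + s * (q ^+ (j * y) * p ^+ k) * (sigma * (p ^+ x - q ^+ y) - 2)); last by ring.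
by rewrite -two_eq subrr mulr0 addr0.
Qed.

Lemma steps_value (n : nat) (c b : rep) (N M : nat) :
  replacement_steps sigma x n c b -> supported c N -> (N + n * x.+1 <= M)%N ->
  value p q y b M = value p q y c M.
Proof.
elim: n c N => [|n IH] c N /= => [<- // | [c1 [step steps]] cN NM].
have [k [j [ckj E]]] := step_replace step.
have c1N : supported c1 (N + x).+1.
  by move=> k' j' out; rewrite E; apply: replace_supported cN ckj _ _ out.
have NM' : ((N + x).+1 + n * x.+1 <= M)%N by move: NM; rewrite mulSn; lia.
rewrite (IH c1 (N + x).+1) // -(replace_value cN ckj (_ : (N + x).+1 <= M)%N); last by lia.
by apply: eq_bigr => j' _; apply: eq_bigr => k' _; rewrite E.
Qed.

End Value.
End Replacement.

Unset Implicit Arguments. Set Strict Implicit.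

Theorem mainTheorem5 (p q : int) (x y : nat) (sigma : int)
    (hsigma : sigma = 1 \/ sigma = -1)
    (h2 : 2 = sigma * (p ^+ x - q ^+ y))
    (I : nat) (a : nat -> int) :
  let alpha := \sum_(i < I.+1) a i * p ^+ i in
  let w := (\sum_(i < I.+1) `|a i|%N)%N in
  exists (n : nat) (b : rep) (J K : nat),
    (n <= (w * w - w) %/ 2)%N /\
    replacement_steps sigma x n (initial_rep a I) b /\
    (forall k j : nat, (K < k)%N \/ (J < j)%N -> b k j = 0) /\
    (forall k j : nat, `|b k j| <= 1) /\
    alpha = \sum_(j < J.+1) q ^+ (j * y) * \sum_(k < K.+1) b k j * p ^+ k.
Proof.
move=> alpha w; set c0 := initial_rep a I.
have c0_supp : supported c0 I.+1.
  by move=> k j; rewrite /c0 /initial_rep; case: eqP => //= -> [Ik | //]; rewrite leqNgt Ik.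
have c0_weight : row_weight c0 0 I.+1 = w.
  by apply: eq_bigr => k _; rewrite /c0 /initial_rep /= -ltnS ltn_ord.
have c0_above : forall k j, (0 < j)%N -> c0 k j = 0.
  by move=> k j j0; rewrite /c0 /initial_rep gtn_eqF.
have c0_below : forall k j, (j < 0)%N -> `|c0 k j| <= 1 by [].
have [n [b [n_le steps clean]]] := clean_rows x hsigma c0_supp c0_below c0_above.
set M := (I.+1 + n * x.+1)%N.
have b_supp : supported b M := steps_supported steps c0_supp.
exists n, b, M, M; split.
  by rewrite divn2 -[w in (_ - w)%N]muln1 -mulnBr subn1 -bin2 -c0_weight.
split => //; split; first by move=> k j [Mk | Mj]; apply: b_supp; [left | right]; apply: ltnW.
split => //.
rewrite -value_by_rows (steps_value h2 steps c0_supp) ?leqnSn //.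
by rewrite value_initial_rep // /M; lia.
Qed.
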